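(* Let $G_i=(V,E)$ be a fixed graph with a distinguished vertex $v_i$, let $k$ be an integer and $c\in[k]$ such that some proper $k$-colouring of $G_i$ assigns $c$ to $v_i$. Let $M=x_1,x_2,\dots,x_l$ be a path in $G_i$ with $x_1=v_i$, and let $E$ be the event ''$M$ is a path of disagreement'' (all of $x_1,\dots,x_l$ are disagreeing). Then $\mathcal{L}_{G_i,k}[E]\le\mathcal{P}_{G_i,k}[E]$.
   Context: $[k]=\{1,\dots,k\}$. The distribution $\mathcal{L}_{G_i,k}$: choose a proper $k$-colouring $\sigma$ uniformly at random among those with $\sigma_{v_i}=c$; choose $q$ uniformly at random from $[k]\setminus\{c\}$; form the disagreement graph $Q_{c,q}$, the subgraph of $G_i$ induced by all vertices reachable from $v_i$ by a path in $G_i$ whose vertices all have colour in $\{c,q\}$; a vertex is ''disagreeing'' if it belongs to $Q_{c,q}$ and ''non-disagreeing'' otherwise. The product measure $\mathcal{P}_{G_i,k}$: independently, each vertex $w$ is disagreeing with probability $q_w=\frac{1}{k-\deg_i(w)}$ (with $q_w=1$ if $k\le\deg_i(w)$), where $\deg_i(w)$ is the degree of $w$ in $G_i$, except that $v_i$ is disagreeing with probability $1$. *)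

(* Graph = symmetric irreflexive relation e on a finType T.
   Colours [k] = 'I_k (0-indexed). *)
From HB Require Import structures.
From mathcomp Require Import all_boot all_order all_algebra.
Set Implicit Arguments. Unset Strict Implicit. Unset Printing Implicit Defensive.
Import Order.TTheory GRing.Theory Num.Theory.
Local Open Scope ring_scope.

Section Defs.
Variables (T : finType) (e : rel T).

Definition proper_col (k : nat) (s : {ffun T -> 'I_k}) : bool :=
  [forall x, forall y, e x y ==> (s x != s y)].

Definition deg (w : T) : nat := #|[set u | e w u]|.

Definition dis_rel (k : nat) (s : {ffun T -> 'I_k}) (c q : 'I_k) : rel T :=
  fun x y => [&& e x y, s x \in [:: c; q] & s y \in [:: c; q]].

Definition disagreeing (v : T) (k : nat) (s : {ffun T -> 'I_k}) (c q : 'I_k)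
  (w : T) : bool :=
  (s v \in [:: c; q]) && connect (dis_rel s c q) v w.

(* L_{G,k}[all vertices of M disagreeing]: sigma uniform among proper
   colourings with sigma v = c, q uniform in [k] \ {c}, independently *)
Definition probL (R : realFieldType) (v : T) (k : nat) (c : 'I_k) (M : seq T) : R :=
  (\sum_(s : {ffun T -> 'I_k} | proper_col s && (s v == c))
     \sum_(q : 'I_k | q != c) (all (disagreeing v s c q) M)%:R)
  / (#|[set s : {ffun T -> 'I_k} | proper_col s && (s v == c)]| * (k - 1))%:R.

(* disagreement probability of w under the product measure *)
Definition qw (R : realFieldType) (k : nat) (v w : T) : R :=
  if w == v then 1
  else if (deg w < k)%N then ((k - deg w)%:R)^-1 else 1.

Definition probP (R : realFieldType) (k : nat) (v : T) (M : seq T) : R :=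
  \sum_(D : {set T} | all (fun x => x \in D) M)
     \prod_(w : T) (if w \in D then qw R k v w else 1 - qw R k v w).

End Defs.

(* Fix q != c.  If the path M = v, x_2, ..., x_l is disagreeing under sigma,
   then consecutive vertices of M are adjacent and coloured in {c, q}, so the
   colouring is forced along M to alternate c, q, c, ...  It therefore suffices
   to count proper colourings with sigma v = c that carry prescribed colours on
   x_2, ..., x_l.  Pinning one more vertex x divides the count by at least
   k - deg x: each colouring pinned at x can be recoloured at x with any colour
   not used on its neighbours, injectively and without leaving the larger set.
   Iterating along M bounds the probability by prod_(j >= 2) q_(x_j), which is
   exactly the product measure of the event. *)

From HB Require Import structures.
From mathcomp Require Import all_boot all_order all_algebra.
Set Implicit Arguments. Unset Strict Implicit. Unset Printing Implicit Defensive.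
Import Order.TTheory GRing.Theory Num.Theory.
Local Open Scope ring_scope.

Section PinnedColourings.
Variables (T : finType) (e : rel T) (v : T) (k : nat) (c : 'I_k).
Hypotheses (e_irr : irreflexive e) (e_sym : symmetric e).

Lemma proper_colP (s : {ffun T -> 'I_k}) y z :
  proper_col e s -> e y z -> s y != s z.
Proof. by move=> /forallP/(_ y)/forallP/(_ z)/implyP. Qed.

Definition pinned (L : seq (T * 'I_k)) : {set {ffun T -> 'I_k}} :=
  [set s | [&& proper_col e s, s v == c & all (fun p => s p.1 == p.2) L]].

Definition recolour (x : T) (s : {ffun T -> 'I_k}) (b : 'I_k) :
  {ffun T -> 'I_k} := [ffun y => if y == x then b else s y].

Lemma recolour_pinned L x a s b :
  x \notin map fst L -> x != v -> s \in pinned ((x, a) :: L) ->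
  b \notin s @: [set u | e x u] -> recolour x s b \in pinned L.
Proof.
move=> xL xv; rewrite !inE => /and3P [pr sv /andP [_ sL]] bN.
apply/and3P; split.
- apply/forallP => y; apply/forallP => z; apply/implyP => eyz; rewrite !ffunE.
  case: (eqVneq y x) => [eyx|yx]; case: (eqVneq z x) => [ezx|zx].
  + by rewrite eyx ezx e_irr in eyz.
  + by apply: contra bN => /eqP ->; apply/imsetP; exists z; rewrite // inE -eyx.
  + by apply: contra bN => /eqP <-; apply/imsetP; exists y; rewrite // inE e_sym -ezx.
  + exact: proper_colP.
- by rewrite ffunE ifN_eqC.
- apply/allP => p pL; rewrite ffunE.
  have /negbTE -> : p.1 != x by apply: contraNneq xL => <-; apply: map_f.
  exact: (allP sL).
Qed.

Lemma card_recolour_pinned L x a s :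
  x \notin map fst L -> x != v -> s \in pinned ((x, a) :: L) ->
  (k - deg e x <= #|[set b | recolour x s b \in pinned L]|)%N.
Proof.
move=> xL xv sP; set N := [set u | e x u].
have freeE : (k - #|s @: N|)%N = #|~: (s @: N)|.
  by have := cardsC (s @: N); rewrite card_ord => E; rewrite -{1}E addKn.
apply: (@leq_trans #|~: (s @: N)|).
  by rewrite -freeE leq_sub2l // leq_imset_card.
apply/subset_leq_card/subsetP => b; rewrite in_setC inE => bN.
exact: recolour_pinned xL xv sP bN.
Qed.

Lemma recolour_inj_pinned L x a :
  {in [set p | p.1 \in pinned ((x, a) :: L)] &,
    injective (fun p : {ffun T -> 'I_k} * 'I_k => recolour x p.1 p.2)}.
Proof.
move=> [s1 b1] [s2 b2]; rewrite !inE /= => /and4P [_ _ /eqP s1x _]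
  /and4P [_ _ /eqP s2x _] E.
have Eb : b1 = b2 by move/ffunP/(_ x): E; rewrite !ffunE eqxx.
subst b2; congr pair; apply/ffunP => y.
case: (eqVneq y x) => [->|yx]; first by rewrite s1x s2x.
by move/ffunP/(_ y): E; rewrite !ffunE (negbTE yx).
Qed.

Lemma card_pinned_cons L x a :
  x \notin map fst L -> x != v ->
  (#|pinned ((x, a) :: L)| * (k - deg e x) <= #|pinned L|)%N.
Proof.
move=> xL xv; set P' := pinned ((x, a) :: L).
apply: (@leq_trans (\sum_(s in P') \sum_(b | recolour x s b \in pinned L) 1)).
  rewrite -sum_nat_const; apply: leq_sum => s sP.
  rewrite sum1dep_card; apply: leq_trans (card_recolour_pinned xL xv sP) _.
  by apply/eq_leq/eq_card => b; rewrite inE.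
rewrite pair_big_dep sum1dep_card.
set D := [set p | (p.1 \in P') && (recolour x p.1 p.2 \in pinned L)].
have injD : {in D &, injective (fun p => recolour x p.1 p.2)}.
  apply: sub_in2 (@recolour_inj_pinned L x a).
  by move=> p; rewrite !inE => /andP [].
rewrite -(card_in_imset injD).
apply/subset_leq_card/subsetP => y /imsetP [p]; rewrite inE => /andP [_ pP] ->.
exact: pP.
Qed.

Lemma qw_ge0 (R : realFieldType) x : 0 <= qw e R k v x.
Proof. by rewrite /qw; do 2?case: ifP => _ //; rewrite invr_ge0. Qed.

Lemma card_pinned_cons_qw (R : realFieldType) L x a :
  x \notin map fst L -> x != v ->
  #|pinned ((x, a) :: L)|%:R <= qw e R k v x * #|pinned L|%:R :> R.
Proof.
move=> xL xv; rewrite /qw (negbTE xv); case: ltnP => degx.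
  have kpos : 0 < (k - deg e x)%:R :> R by rewrite ltr0n subn_gt0.
  by rewrite mulrC ler_pdivlMr // -natrM ler_nat card_pinned_cons.
rewrite mul1r ler_nat; apply/subset_leq_card/subsetP => s.
by rewrite !inE /= => /and4P [-> -> _ ->].
Qed.

Definition alt_col (q : 'I_k) (b : bool) : 'I_k := if b then q else c.

Fixpoint alt_pins (q : 'I_k) (p : seq T) (b : bool) : seq (T * 'I_k) :=
  if p is x :: p' then (x, alt_col q b) :: alt_pins q p' (~~ b) else [::].

Lemma map_fst_alt_pins q p b : map fst (alt_pins q p b) = p.
Proof. by elim: p b => //= x p IH b; rewrite IH. Qed.

Lemma card_pinned_alt (R : realFieldType) q p b : uniq (v :: p) ->
  #|pinned (alt_pins q p b)|%:R
    <= (\prod_(x <- p) qw e R k v x) * #|pinned [::]|%:R :> R.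
Proof.
elim: p b => [|x p IH] b /=; first by rewrite big_nil mul1r.
rewrite inE negb_or => /andP [/andP [vx vp] /andP [xp up]].
rewrite big_cons -mulrA.
have := @card_pinned_cons_qw R (alt_pins q p (~~ b)) x (alt_col q b).
rewrite map_fst_alt_pins eq_sym => /(_ xp vx) /le_trans; apply.
by rewrite ler_wpM2l ?qw_ge0 // IH //= vp.
Qed.

Lemma alt_pins_agree (s : {ffun T -> 'I_k}) q : proper_col e s -> q != c ->
  forall p u b, path e u p -> s u = alt_col q b ->
  all (fun w => s w \in [:: c; q]) p ->
  all (fun x => s x.1 == x.2) (alt_pins q p (~~ b)).
Proof.
move=> pr qc; elim=> [|x p IH] u b //= /andP [eux pp] su /andP [sx sp].
have sxE : s x = alt_col q (~~ b).
  move: sx (proper_colP pr eux); rewrite su !inE /alt_col.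
  by case: (b) => /= /orP [] /eqP ->; rewrite ?eqxx.
by rewrite sxE eqxx (IH x (~~ b)).
Qed.

Lemma dis_path_last_col (s : {ffun T -> 'I_k}) q p u :
  s u \in [:: c; q] -> path (dis_rel e s c q) u p -> s (last u p) \in [:: c; q].
Proof. by elim: p u => //= x p IH u _ /andP [/and3P [_ _ sx]]; apply: IH. Qed.

Lemma disagreeing_path_pinned (s : {ffun T -> 'I_k}) q p :
  proper_col e s -> s v = c -> q != c -> path e v p ->
  all (disagreeing e v s c q) (v :: p) -> s \in pinned (alt_pins q p true).
Proof.
move=> pr sv qc vp /andP [_ dis]; rewrite inE pr sv eqxx /=.
apply: (alt_pins_agree pr qc (b := false) vp) => //.
apply/allP => w /(allP dis) /andP [sv0 /connectP [r rp ->]].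
exact: dis_path_last_col rp.
Qed.

Lemma sum_disagreeing_le (R : realFieldType) q p :
  q != c -> path e v p -> uniq (v :: p) ->
  \sum_(s : {ffun T -> 'I_k} | proper_col e s && (s v == c))
     (all (disagreeing e v s c q) (v :: p))%:R
    <= (\prod_(x <- p) qw e R k v x) * #|pinned [::]|%:R :> R.
Proof.
move=> qc vp up; apply: le_trans (card_pinned_alt R q true up).
rewrite -sum1_card natr_sum [leRHS]big_mkcond [leLHS]big_mkcond.
apply: ler_sum => s _; case: ifPn => [/andP [pr /eqP sv]|_]; last by case: ifP.
move: (disagreeing_path_pinned pr sv qc vp); case: (all _ _) => [->//|_].
by case: ifP.
Qed.

End PinnedColourings.

Lemma probP_prod (R : realFieldType) (T : finType) (e : rel T) (k : nat) (v : T)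
  (M : seq T) : uniq M -> probP e R k v M = \prod_(x <- M) qw e R k v x.
Proof.
move=> uM; set q := qw e R k v.
pose r w := if w \in M then 0 else 1 - q w.
transitivity (\prod_(w : T) (q w + r w)).
  rewrite bigA_distr /probP big_mkcond /=; apply: eq_big => // D _.
  case: ifPn => [MD|/allPn [x xM xD]].
    apply: eq_bigr => w _; rewrite /r; case: ifPn => // wD.
    by rewrite (contraNF (allP MD w)).
  by rewrite (bigD1 x) //= (negbTE xD) /r xM mul0r.
rewrite (big_uniq _ uM) [RHS]big_mkcond /=; apply: eq_bigr => w _.
by rewrite /r; case: ifP; rewrite ?addr0 // addrC subrK.
Qed.

Theorem lemma6 (R : realFieldType) (T : finType) (e : rel T) (v : T)
  (k : nat) (c : 'I_k) (s : seq T) :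
  irreflexive e -> symmetric e -> (1 < k)%N ->
  (exists sigma : {ffun T -> 'I_k}, proper_col e sigma && (sigma v == c)) ->
  path e v s -> uniq (v :: s) ->
  probL e R v c (v :: s) <= probP e R k v (v :: s).
Proof.
move=> irr sym k_gt1 [sg sgP] vs uvs.
rewrite probP_prod // big_cons /qw eqxx mul1r -/(qw e R k v).
set P := \prod_(x <- s) qw e R k v x.
have cardE : #|[set s0 : {ffun T -> 'I_k} | proper_col e s0 && (s0 v == c)]|
           = #|pinned e v c [::]| by apply: eq_card => s0; rewrite !inE andbT.
have pinned_gt0 : (0 < #|pinned e v c [::]|)%N.
  by apply/card_gt0P; exists sg; rewrite inE andbT.
have card_qs : #|[pred q : 'I_k | q != c]| = (k - 1)%N.
  by have := cardC1 c; rewrite card_ord subn1 => <-; apply: eq_card.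
rewrite /probL exchange_big /= cardE ler_pdivrMr ?natrM ?mulr_gt0 ?ltr0n ?subn_gt0 //.
apply: le_trans (_ : \sum_(q | q != c) P * #|pinned e v c [::]|%:R <= _).
  by apply: ler_sum => q qc; apply: sum_disagreeing_le.
by rewrite sumr_const card_qs [X in _ <= P * X]mulr_natr -mulrnAr.
Qed.
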